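(* Let $Y\subset\mathbb C^n$ be a $k$-dimensional subspace and $a\in(\mathbb C^\times)^n$. Assume that for every $j\in\{1,\dots,n\}$, $Y$ is not contained in the hyperplane $\{q_j=0\}$ and $Y^\perp$ is not contained in the hyperplane $\{p_j=0\}$. Then $L_{Y,a}$ is an irreducible smooth $n$-dimensional Lagrangian subvariety of $\mathbb C^n\times\{p\in(\mathbb C^n)^*:\prod_{j=1}^np_j\ne0\}$, defined by the equations $$F_\alpha:=\sum_{j=1}^n\alpha_jp_j=0\ \ (\alpha\in Y),\qquad G_{\beta,a}:=\sum_{j=1}^n\beta_j(q_j-a_j/p_j)=0\ \ (\beta\in Y^\perp),$$ and the set of all functions $\{F_\alpha,G_{\beta,a}\}$ is in involution.
   Context: $\mathbb C^n$ has coordinates $q_1,\dots,q_n$, the dual space $(\mathbb C^n)^*$ has dual coordinates $p_1,\dots,p_n$, and $\mathbb C^n\times(\mathbb C^n)^*$ carries the symplectic form $\sum_jdp_j\wedge dq_j$. Two functions $M,N$ are in involution if $\sum_j(\partial M/\partial q_j\,\partial N/\partial p_j-\partial M/\partial p_j\,\partial N/\partial q_j)=0$. $Y^\perp\subset(\mathbb C^n)^*$ is the annihilator of $Y$. The rational symplectic map $r_a(q_1,\dots,q_n,p_1,\dots,p_n)=(q_1+a_1/p_1,\dots,q_n+a_n/p_n,p_1,\dots,p_n)$ is defined where all $p_j\ne0$, and $L_{Y,a}=r_a(Y\times Y^\perp)$ is the image under $r_a$ of the points of $Y\times Y^\perp$ with all $p_j\ne0$. *)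

From mathcomp Require Import all_boot all_order all_algebra.
From mathcomp Require Import all_classical all_reals all_analysis.
From mathcomp.real_closed Require Import complex.
Set Implicit Arguments. Unset Strict Implicit. Unset Printing Implicit Defensive.
Import Order.TTheory GRing.Theory Num.Theory.
Import numFieldNormedType.Exports.
Local Open Scope ring_scope.

(* A point (q, p) of C^n x (C^n)^*, with q, p row vectors of complex numbers. *)
Notation cplx R := (R[i]^o).
Notation pt R n := ('rV[cplx R]_n * 'rV[cplx R]_n)%type.

Definition pairing (R : realType) (n : nat) (x y : 'rV[cplx R]_n) : cplx R :=
  \sum_(j < n) x 0 j * y 0 j.

Definition perp (R : realType) (n : nat) (Y : {vspace 'rV[cplx R]_n})
    (b : 'rV[cplx R]_n) : Prop :=
  forall a, a \in Y -> pairing a b = 0.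

Definition Uopen (R : realType) (n : nat) (x : pt R n) : Prop :=
  \prod_(j < n) x.2 0 j != 0.

Definition r_map (R : realType) (n : nat) (a : 'rV[cplx R]_n) (x : pt R n)
    : pt R n :=
  (\row_j (x.1 0 j + a 0 j / x.2 0 j), x.2).

Definition L_Ya (R : realType) (n : nat) (Y : {vspace 'rV[cplx R]_n})
    (a : 'rV[cplx R]_n) (x : pt R n) : Prop :=
  exists y eta : 'rV[cplx R]_n,
    [/\ y \in Y, perp Y eta, (forall j, eta 0 j != 0) & x = r_map a (y, eta)].

Definition F_fun (R : realType) (n : nat) (al : 'rV[cplx R]_n) (x : pt R n)
    : cplx R := \sum_(j < n) al 0 j * x.2 0 j.
Definition G_fun (R : realType) (n : nat) (a be : 'rV[cplx R]_n) (x : pt R n)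
    : cplx R := \sum_(j < n) be 0 j * (x.1 0 j - a 0 j / x.2 0 j).

Definition dq (R : realType) (n : nat) (j : 'I_n) (H : pt R n -> cplx R)
    (x : pt R n) : cplx R :=
  'D_(delta_mx 0 j) (fun q : 'rV[cplx R]_n => (H (q, x.2) : cplx R)) x.1.
Definition dp (R : realType) (n : nat) (j : 'I_n) (H : pt R n -> cplx R)
    (x : pt R n) : cplx R :=
  'D_(delta_mx 0 j) (fun p : 'rV[cplx R]_n => (H (x.1, p) : cplx R)) x.2.

(* Poisson bracket for the symplectic form  sum_j dp_j /\ dq_j. *)
Definition poisson (R : realType) (n : nat) (M N : pt R n -> cplx R)
    (x : pt R n) : cplx R :=
  \sum_(j < n) (dq j M x * dp j N x - dp j M x * dq j N x).

Definition in_involution (R : realType) (n : nat)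
    (fam : (pt R n -> cplx R) -> Prop) : Prop :=
  forall M N, fam M -> fam N -> forall x, Uopen x -> poisson M N x = 0.

(* Regular functions on U = C^n x (C-{0})^n : the ring C[q, p, p^-1]. *)
Inductive regular (R : realType) (n : nat) : (pt R n -> cplx R) -> Prop :=
| reg_const (c : cplx R) : regular (fun x : pt R n => c)
| reg_q (j : 'I_n) : regular (fun x => x.1 0 j)
| reg_p (j : 'I_n) : regular (fun x => x.2 0 j)
| reg_pinv (j : 'I_n) : regular (fun x => (x.2 0 j)^-1)
| reg_add f g : regular f -> regular g -> regular (fun x => f x + g x)
| reg_mul f g : regular f -> regular g -> regular (fun x => f x * g x).

Definition dfun (R : realType) (n : nat) (H : pt R n -> cplx R) (x v : pt R n)
    : cplx R :=
  \sum_(j < n) (dq j H x * v.1 0 j + dp j H x * v.2 0 j).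

Definition dmx (R : realType) (n : nat) (H : pt R n -> cplx R) (x : pt R n)
    : 'rV[cplx R]_(n + n) :=
  row_mx (\row_j dq j H x) (\row_j dp j H x).

Definition zero_locus (R : realType) (n : nat) (S : (pt R n -> cplx R) -> Prop)
    (x : pt R n) : Prop :=
  Uopen x /\ forall f, S f -> f x = 0.

(* Irreducibility in the Zariski topology of U (closed sets = zero loci of
   families of regular functions). *)
Definition zariski_irreducible (R : realType) (n : nat) (L : pt R n -> Prop)
    : Prop :=
  (exists x, L x) /\
  forall S1 S2 : (pt R n -> cplx R) -> Prop,
    (forall f, S1 f -> regular f) -> (forall f, S2 f -> regular f) ->
    (forall x, L x -> zero_locus S1 x \/ zero_locus S2 x) ->
    (forall x, L x -> zero_locus S1 x) \/ (forall x, L x -> zero_locus S2 x).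

Definition smooth_of_dim (R : realType) (n d : nat) (L : pt R n -> Prop)
    : Prop :=
  forall x, L x ->
    exists g : 'I_(n + n - d) -> (pt R n -> cplx R),
      [/\ forall i, regular (g i),
          \rank (\matrix_i (dmx (g i) x : 'rV[cplx R]_(n + n))) = (n + n - d)%N
        & \forall y \near x, (L y <-> (Uopen y /\ forall i, g i y = 0))].

Definition tangent_space (R : realType) (n : nat) (L : pt R n -> Prop)
    (x v : pt R n) : Prop :=
  forall g, regular g -> (forall y, L y -> g y = 0) -> dfun g x v = 0.

Definition omega (R : realType) (n : nat) (v w : pt R n) : cplx R :=
  \sum_(j < n) (v.2 0 j * w.1 0 j - w.2 0 j * v.1 0 j).

Definition lagrangian_subvariety (R : realType) (n : nat) (L : pt R n -> Prop)
    : Prop :=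
  [/\ forall x, L x -> Uopen x,
      exists S : (pt R n -> cplx R) -> Prop,
        (forall f, S f -> regular f) /\ (forall x, L x <-> zero_locus S x),
      smooth_of_dim n L
    & forall x, L x -> forall v w, tangent_space L x v -> tangent_space L x w ->
        omega v w = 0].

From mathcomp Require Import all_boot all_order all_algebra.
From mathcomp Require Import all_classical all_reals all_analysis.
From mathcomp.real_closed Require Import complex.
From mathcomp Require Import ring.
Set Implicit Arguments. Unset Strict Implicit.
Import Order.TTheory GRing.Theory Num.Theory.
Import numFieldNormedType.Exports.
Local Open Scope ring_scope.

(* L_{Y,a} is the image under the symplectic map r_a of the linear Lagrangian
   Y x Y^perp, which is cut out by <alpha, p> (alpha in Y) and <beta, q>
   (beta in Y^perp); composing with r_a^-1, which only replaces q by q - a/p,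
   gives the equations F_alpha and G_beta.  Their brackets are 0 or
   -<alpha, beta> = 0.  A tangent vector v of L_{Y,a} satisfies v_p in Y^perp
   and v_q + (a/p^2) v_p in Y, which forces omega to vanish; bases of Y and
   Y^perp give n defining functions whose differentials form a block
   triangular matrix of full rank.  For irreducibility, a regular function
   restricted to the image of a segment of Y x Y^perp is a polynomial in the
   parameter divided by a power of the product of the p-coordinates, so two
   regular functions that are somewhere nonzero on L_{Y,a} are simultaneously
   nonzero at a generic point of such a segment.  L_{Y,a} is nonempty because
   a generic point of Y^perp has no zero coordinate. *)

Section CoordinateDerivatives.
Variables (K : numFieldType) (n : nat).

Lemma delta_shiftE (p : 'rV[K^o]_n) j (h : K) i :
  (h *: delta_mx 0 j + p) 0 i = (if i == j then h + p 0 i else p 0 i).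
Proof. by rewrite !mxE /=; case: (i == j); rewrite ?mulr1 ?mulr0 ?add0r. Qed.

Lemma derive_sum_coord (f : 'rV[K^o]_n -> K^o) (c : 'I_n -> K^o -> K^o)
    (p : 'rV[K^o]_n) j :
  (forall v, f v = \sum_i c i (v 0 i)) -> 'D_(delta_mx 0 j) f p = 'D_1 (c j) (p 0 j).
Proof.
move=> /funext ->; rewrite /derive; f_equal; f_equal; apply: funext => h /=.
congr (_ *: _); rewrite -sumrB (bigD1 j) //= big1 ?addr0 => [|i /negbTE ij].
  by rewrite delta_shiftE eqxx /GRing.scale /= mulr1.
by rewrite delta_shiftE ij subrr.
Qed.

Lemma derive1_affine (b c x : K^o) : 'D_1 (fun t : K^o => b * t + c) x = b.
Proof.
apply: derive_val.
have := is_deriveD (is_deriveZ b (is_derive_id x 1)) (is_derive_cst c x 1).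
by rewrite /GRing.scale /= mulr1 addr0.
Qed.

Lemma derive1_inv (b c x : K^o) : x != 0 ->
  'D_1 (fun t : K^o => b / t + c) x = - b / x ^+ 2.
Proof.
move=> x0; apply: derive_val.
have Vx : is_derive x 1 (fun t : K^o => t^-1) (- x ^- 2).
  have := derivableP (derivableV x0 (@derivable_id _ _ x 1)).
  by rewrite deriveV // derive_id /GRing.scale /= mulr1.
have := is_deriveD (is_deriveZ b Vx) (is_derive_cst c x 1).
by rewrite addr0 /GRing.scale /= mulrN -mulNr.
Qed.

End CoordinateDerivatives.

Section PartialDerivatives.
Variables (R : realType) (n : nat).
Implicit Types (al be a : 'rV[cplx R]_n) (x : pt R n).

Lemma dq_F al x j : dq j (F_fun al) x = 0.
Proof. exact: derive_cst. Qed.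

Lemma dp_F al x j : dp j (F_fun al) x = al 0 j.
Proof.
rewrite /dp (@derive_sum_coord _ _ _ (fun i t => al 0 i * t + 0)) ?derive1_affine //.
by move=> v; apply: eq_bigr => i _; rewrite addr0.
Qed.

Lemma dq_G a be x j : dq j (G_fun a be) x = be 0 j.
Proof.
rewrite /dq (@derive_sum_coord _ _ _
  (fun i t => be 0 i * t + - (be 0 i * (a 0 i / x.2 0 i)))) ?derive1_affine //.
by move=> v; apply: eq_bigr => i _; rewrite /= mulrBr.
Qed.

Lemma dp_G a be x j : x.2 0 j != 0 ->
  dp j (G_fun a be) x = be 0 j * a 0 j / x.2 0 j ^+ 2.
Proof.
move=> p0; rewrite /dp (@derive_sum_coord _ _ _
  (fun i t => - (be 0 i * a 0 i) / t + be 0 i * x.1 0 i)) ?derive1_inv ?opprK //.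
by move=> v; apply: eq_bigr => i _; rewrite /= mulrBr addrC mulNr mulrA.
Qed.

End PartialDerivatives.

Lemma poly_nonroot (K : numDomainType) (p : {poly K}) :
  p != 0 -> exists t, ~~ root p t.
Proof.
move=> p0; apply: contrapT => all_roots.
have roots : all (root p) [seq i%:R : K | i <- iota 0 (size p)].
  by apply/allP => t _; apply: contra_notT all_roots => pt; exists t.
have uniq_nat : uniq [seq i%:R : K | i <- iota 0 (size p)].
  by rewrite map_inj_uniq ?iota_uniq // => i j /eqP; rewrite eqr_nat => /eqP.
by have := max_poly_roots p0 roots uniq_nat; rewrite size_map size_iota ltnn.
Qed.

Lemma row_free_block (F : fieldType) m1 m2 n1 n2 (A : 'M[F]_(m1, n2))
    (B : 'M[F]_(m2, n1)) (C : 'M[F]_(m2, n2)) :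
  row_free A -> row_free B -> row_free (col_mx (row_mx 0 A) (row_mx B C)).
Proof.
move=> freeA freeB; apply/inj_row_free => w; rewrite -[w]hsubmxK.
move: (lsubmx w) (rsubmx w) => u v.
rewrite mul_row_col !mul_mx_row mulmx0 add_row_mx add0r -(row_mx0 _ 1 n1 n2).
move=> /eq_row_mx [vB uAvC].
have v0 : v = 0 by apply: (row_free_inj freeB); rewrite vB mul0mx.
subst v; move: uAvC; rewrite mul0mx addr0 => uA.
have -> : u = 0 by apply: (row_free_inj freeA); rewrite uA mul0mx.
exact: row_mx0.
Qed.

Section Annihilator.
Variables (R : realType) (n : nat) (Y : {vspace 'rV[cplx R]_n}).
Local Notation C := (cplx R).

Lemma pairingC (x y : 'rV[C]_n) : pairing x y = pairing y x.
Proof. by apply: eq_bigr => j _; rewrite mulrC. Qed.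

Lemma mul_tr_mxE m (u : 'rV[C]_n) (B : 'M[C]_(m, n)) i :
  (u *m B^T) 0 i = pairing u (row i B).
Proof. by rewrite mxE; apply: eq_bigr => j _; rewrite !mxE. Qed.

Lemma pairing_mxE (x y : 'rV[C]_n) : pairing x y = (x *m y^T) 0 0.
Proof. by rewrite mxE; apply: eq_bigr => j _; rewrite !mxE. Qed.

Lemma pairing_submx m (B : 'M[C]_(m, n)) al b :
  (forall i, pairing (row i B) b = 0) -> (al <= B)%MS -> pairing al b = 0.
Proof.
move=> Bb /submxP [w ->]; rewrite pairing_mxE -mulmxA.
suff -> : B *m b^T = 0 by rewrite mulmx0 mxE.
apply: trmx_inj; rewrite trmx_mul trmxK trmx0.
by apply/matrixP => i j; rewrite ord1 mul_tr_mxE pairingC Bb mxE.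
Qed.

Definition basis_mx : 'M[C]_(\dim Y, n) := \matrix_(i < \dim Y) (vbasis Y)`_i.

Lemma memv_basis_mx y : (y \in Y) = (y <= basis_mx)%MS.
Proof.
apply/idP/idP => [/coord_vbasis ->|/submxP [w ->]].
  apply/submxP; exists (\row_i coord (vbasis Y) i y); rewrite mulmx_sum_row.
  by apply: eq_bigr => i _; rewrite rowK mxE.
rewrite mulmx_sum_row; apply: memv_suml => i _; apply: memvZ.
by rewrite rowK; apply/vbasis_mem/mem_nth; rewrite size_tuple.
Qed.

Definition perp_mx : 'M[C]_n := kermx basis_mx^T.

Lemma perp_mxP b : perp Y b <-> (b <= perp_mx)%MS.
Proof.
rewrite sub_kermx; split => [Yb|/eqP bA al].
  apply/eqP/matrixP => i j; rewrite ord1 mul_tr_mxE mxE pairingC Yb //.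
  by rewrite memv_basis_mx row_sub.
rewrite memv_basis_mx; apply: pairing_submx => i.
by rewrite pairingC -mul_tr_mxE bA mxE.
Qed.

Lemma perpD b1 b2 : perp Y b1 -> perp Y b2 -> perp Y (b1 + b2).
Proof. by rewrite !perp_mxP; exact: addmx_sub. Qed.

Lemma perpZ (t : C) b : perp Y b -> perp Y (t *: b).
Proof. by rewrite !perp_mxP; exact: scalemx_sub. Qed.

Lemma perp_sum (I : Type) (r : seq I) (P : pred I) (b : I -> 'rV[C]_n) :
  (forall i, P i -> perp Y (b i)) -> perp Y (\sum_(i <- r | P i) b i).
Proof.
by move=> Pb; apply/perp_mxP/summx_sub => i /Pb /perp_mxP.
Qed.

Lemma perp_perp y : (forall b, perp Y b -> pairing y b = 0) -> y \in Y.
Proof.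
move=> Hy; rewrite memv_basis_mx submxE; apply/eqP/matrixP => i j.
rewrite ord1 -[cokermx _]trmxK mul_tr_mxE mxE Hy //.
apply/perp_mxP; rewrite sub_kermx -row_mul -trmx_mul mulmx_coker.
by rewrite trmx0 row0.
Qed.

Lemma rank_basis_perp : (\rank basis_mx + \rank perp_mx)%N = n.
Proof. by rewrite mxrank_ker mxrank_tr subnKC // rank_leq_col. Qed.

Lemma perp_nonzero_coords : (forall j, ~ (forall be, perp Y be -> be 0 j = 0)) ->
  exists2 eta, perp Y eta & forall j, eta 0 j != 0.
Proof.
move=> no_zero_coord.
have /choice [b Hb] : forall j : 'I_n, exists be, perp Y be /\ be 0 j != 0.
  move=> j; apply: contra_notP (no_zero_coord j) => nob be be_perp.
  by apply/eqP; apply: contra_notT nob => bj; exists be.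
(* Coordinate i of \sum_j t^j b_j is (c i).[t], and c i has coefficient b_i,i at X^i. *)
pose c i : {poly C} := \sum_j b j 0 i *: 'X^j.
have c_neq0 i : c i != 0.
  have ci_i : (c i)`_i = b i 0 i.
    rewrite coef_sum (bigD1 i) //= coefZ coefXn eqxx mulr1 big1 ?addr0 // => j ji.
    rewrite coefZ coefXn (_ : (i == j :> nat) = false) ?mulr0 //.
    by apply: contraNF ji => /eqP/val_inj ->.
  by apply: contraNneq (Hb i).2 => ci; rewrite -ci_i ci coef0.
have [t] : exists t, ~~ root (\prod_i c i) t.
  by apply: poly_nonroot; apply/prodf_neq0 => i _.
rewrite rootE horner_prod => /prodf_neq0 ct.
exists (\sum_(j < n) t ^+ j *: b j).
  by apply: perp_sum => j _; apply/perpZ/(Hb j).1.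
move=> i; apply: contraNneq (ct i isT) => eta_i; rewrite -eta_i /c horner_sum summxE.
by apply/eqP; apply: eq_bigr => j _; rewrite hornerZ hornerXn !mxE mulrC.
Qed.

End Annihilator.

Section RegularFunctions.
Variables (R : realType) (n : nat).
Local Notation C := (cplx R).

Lemma regular_sum (I : Type) (r : seq I) (f : I -> pt R n -> C) :
  (forall i, regular (f i)) -> regular (fun x => \sum_(i <- r) f i x).
Proof.
move=> fR; elim: r => [|i r IHr].
  under eq_fun => x do rewrite big_nil.
  exact: reg_const.
under eq_fun => x do rewrite big_cons.
exact: reg_add.
Qed.

Lemma regular_F (al : 'rV[C]_n) : regular (F_fun al).
Proof. by apply: regular_sum => j; exact: (reg_mul (reg_const _ _) (reg_p _ j)). Qed.

Lemma regular_G (a be : 'rV[C]_n) : regular (G_fun a be).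
Proof.
apply: regular_sum => j; apply: (reg_mul (reg_const _ _)).
under eq_fun => x do rewrite -mulNr.
exact: reg_add (reg_q _ j) (reg_mul (reg_const _ _) (reg_pinv _ j)).
Qed.

Definition line (u v : 'rV[C]_n) (t : C) : 'rV[C]_n := (1 - t) *: u + t *: v.

Definition line_poly (u v : 'rV[C]_n) (j : 'I_n) : {poly C} :=
  (u 0 j)%:P + (v 0 j - u 0 j) *: 'X.

Lemma line0 u v : line u v 0 = u.
Proof. by rewrite /line subr0 scale1r scale0r addr0. Qed.

Lemma line1 u v : line u v 1 = v.
Proof. by rewrite /line subrr scale0r scale1r add0r. Qed.

Lemma line_polyE u v j t : (line_poly u v j).[t] = line u v t 0 j.
Proof.
rewrite hornerD hornerC hornerZ hornerX !mxE.
by rewrite /GRing.scale /=; ring.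
Qed.

Variables (a y1 e1 y2 e2 : 'rV[C]_n).

Definition line_denom : {poly C} := \prod_j line_poly e1 e2 j.

Lemma line_denom_split t j :
  line_denom.[t] = line e1 e2 t 0 j * (\prod_(i | i != j) line_poly e1 e2 i).[t].
Proof. by rewrite /line_denom horner_prod (bigD1 j) //= line_polyE horner_prod. Qed.

Lemma line_denom_neq0 t j : line_denom.[t] != 0 -> line e1 e2 t 0 j != 0.
Proof. by rewrite (line_denom_split t j) mulf_eq0 negb_or => /andP []. Qed.

Lemma line_denom_neq0_coords t :
  (forall j, line e1 e2 t 0 j != 0) -> line_denom.[t] != 0.
Proof.
by move=> nz; rewrite horner_prod; apply/prodf_neq0 => j _; rewrite line_polyE.
Qed.

Lemma regular_on_line f : regular f ->
  exists P N, forall t, line_denom.[t] != 0 ->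
    f (r_map a (line y1 y2 t, line e1 e2 t)) * line_denom.[t] ^+ N = P.[t].
Proof.
elim=> [c|j|j|j|g h _ [P1 [N1 H1]] _ [P2 [N2 H2]]|g h _ [P1 [N1 H1]] _ [P2 [N2 H2]]].
- by exists c%:P, 0%N => t _; rewrite mulr1 hornerC.
- exists (line_poly y1 y2 j * line_denom
          + a 0 j *: \prod_(i | i != j) line_poly e1 e2 i), 1%N.
  move=> t Dt; have Et := line_denom_neq0 j Dt.
  rewrite hornerD hornerM hornerZ line_polyE (line_denom_split t j) /= mxE.
  by field.
- by exists (line_poly e1 e2 j), 0%N => t _; rewrite mulr1 line_polyE.
- exists (\prod_(i | i != j) line_poly e1 e2 i), 1%N => t Dt.
  have Et := line_denom_neq0 j Dt.
  by rewrite (line_denom_split t j) /=; field.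
- exists (P1 * line_denom ^+ N2 + P2 * line_denom ^+ N1), (N1 + N2)%N => t Dt.
  by rewrite hornerD !hornerM !horner_exp -H1 // -H2 // exprD; ring.
- exists (P1 * P2), (N1 + N2)%N => t Dt.
  by rewrite hornerM -H1 // -H2 // exprD; ring.
Qed.

End RegularFunctions.

Section LagrangianSubvariety.
Variables (R : realType) (n : nat) (Y : {vspace 'rV[cplx R]_n}) (a : 'rV[cplx R]_n).
Local Notation C := (cplx R).
Local Notation L := (L_Ya Y a).
Implicit Types (M N : pt R n -> C) (al be : 'rV[C]_n) (x : pt R n).

Definition FG_functions (H : pt R n -> C) : Prop :=
  (exists2 al, al \in Y & H = F_fun al) \/ (exists2 be, perp Y be & H = G_fun a be).

Lemma Uopen_neq0 (x : pt R n) j : Uopen x -> x.2 0 j != 0.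
Proof. by move/prodf_neq0; apply. Qed.

Definition r_inv_q (x : pt R n) : 'rV[C]_n := \row_j (x.1 0 j - a 0 j / x.2 0 j).

Lemma G_pairing be x : G_fun a be x = pairing be (r_inv_q x).
Proof. by apply: eq_bigr => j _; rewrite mxE. Qed.

Lemma L_YaP x : L x <->
  [/\ Uopen x, (forall al, al \in Y -> F_fun al x = 0)
    & (forall be, perp Y be -> G_fun a be x = 0)].
Proof.
split=> [[y [eta [yY eta_perp eta0 ->]]]|[Ux Fx Gx]].
  split=> [|al /eta_perp //|be be_perp]; first exact/prodf_neq0.
  rewrite G_pairing pairingC -(be_perp y yY); congr pairing.
  by apply/matrixP => i j; rewrite ord1 !mxE addrK.
exists (r_inv_q x), x.2; split=> [||j|].
- by apply: perp_perp => be /Gx; rewrite G_pairing pairingC.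
- exact: Fx.
- exact: Uopen_neq0.
case: x {Ux Fx Gx} => q p; congr pair.
by apply/matrixP => i j; rewrite ord1 !mxE subrK.
Qed.

Lemma L_Ya_zero_locus x : L x <-> zero_locus FG_functions x.
Proof.
rewrite L_YaP; split=> [[Ux Fx Gx]|[Ux FGx]].
  by split=> // f [[al /Fx Fal ->]|[be /Gx Gbe ->]].
by split=> // [al alY|be be_perp]; apply: FGx; [left; exists al|right; exists be].
Qed.

Lemma poisson_FF al al' x : poisson (F_fun al) (F_fun al') x = 0.
Proof. by apply: big1 => j _; rewrite !dq_F mul0r mulr0 subrr. Qed.

Lemma poisson_FG al be x : poisson (F_fun al) (G_fun a be) x = - pairing al be.
Proof.
rewrite /poisson /pairing -sumrN; apply: eq_bigr => j _.
by rewrite dq_F dp_F dq_G mul0r sub0r.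
Qed.

Lemma poisson_GG be be' x : Uopen x -> poisson (G_fun a be) (G_fun a be') x = 0.
Proof.
by move=> Ux; apply: big1 => j _; rewrite !dq_G !dp_G ?Uopen_neq0 //; ring.
Qed.

Lemma poisson_anti M N x : poisson M N x = - poisson N M x.
Proof.
rewrite /poisson -sumrN; apply: eq_bigr => j _.
by move: (dq j M x) (dp j M x) (dq j N x) (dp j N x) => u v w z; ring.
Qed.

Lemma FG_in_involution : in_involution FG_functions.
Proof.
move=> M N + + x Ux.
case=> [[al alY ->]|[be be_perp ->]] [[al' al'Y ->]|[be' be'_perp ->]].
- exact: poisson_FF.
- by rewrite poisson_FG be'_perp ?oppr0.
- by rewrite poisson_anti poisson_FG be_perp ?oppr0.
- exact: poisson_GG.
Qed.

Lemma L_Ya_line y1 e1 y2 e2 t : y1 \in Y -> y2 \in Y -> perp Y e1 -> perp Y e2 ->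
  (line_denom e1 e2).[t] != 0 -> L (r_map a (line y1 y2 t, line e1 e2 t)).
Proof.
move=> y1Y y2Y e1_perp e2_perp Dt; exists (line y1 y2 t), (line e1 e2 t).
split=> // [||j]; first by rewrite rpredD ?rpredZ.
  by apply: perpD; apply: perpZ.
exact: line_denom_neq0.
Qed.

Lemma L_Ya_nonvanishing2 f1 f2 x1 x2 : regular f1 -> regular f2 ->
  L x1 -> L x2 -> f1 x1 != 0 -> f2 x2 != 0 ->
  exists2 x, L x & (f1 x != 0) && (f2 x != 0).
Proof.
move=> f1R f2R [y1 [e1 [y1Y e1_perp e1_0 ->]]] [y2 [e2 [y2Y e2_perp e2_0 ->]]] f1x f2x.
pose D := line_denom e1 e2; pose seg t := r_map a (line y1 y2 t, line e1 e2 t).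
have D0 : D.[0] != 0 by apply: line_denom_neq0_coords => j; rewrite line0.
have D1 : D.[1] != 0 by apply: line_denom_neq0_coords => j; rewrite line1.
have D_neq0 : D != 0 by apply: contraNneq D0 => ->; rewrite horner0.
have numer_neq0 (f : pt R n -> C) (P : {poly C}) k t :
    (forall s, D.[s] != 0 -> f (seg s) * D.[s] ^+ k = P.[s]) ->
    D.[t] != 0 -> f (seg t) != 0 -> P != 0.
  move=> HP Dt; apply: contraNneq => P0; move/eqP: (HP t Dt).
  by rewrite P0 horner0 mulf_eq0 expf_eq0 (negbTE Dt) andbF orbF.
have [P1 [N1 HP1]] := regular_on_line a y1 e1 y2 e2 f1R.
have [P2 [N2 HP2]] := regular_on_line a y1 e1 y2 e2 f2R.
have P1_neq0 : P1 != 0 by apply: numer_neq0 HP1 D0 _; rewrite /seg !line0.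
have P2_neq0 : P2 != 0 by apply: numer_neq0 HP2 D1 _; rewrite /seg !line1.
have [t] := poly_nonroot (mulf_neq0 (mulf_neq0 P1_neq0 P2_neq0) D_neq0).
rewrite rootE !hornerM !mulf_eq0 !negb_or => /andP [/andP [P1t P2t] Dt].
exists (seg t); first exact: L_Ya_line.
apply/andP; split.
  by apply: contraNneq P1t => f1t; rewrite -HP1 // f1t mul0r.
by apply: contraNneq P2t => f2t; rewrite -HP2 // f2t mul0r.
Qed.

Lemma not_zero_locus S x : Uopen x -> ~ zero_locus S x -> exists2 f, S f & f x != 0.
Proof.
move=> Ux; apply: contra_notP => noS; split=> // f Sf.
by apply/eqP; apply: contra_notT noS => fx; exists f.
Qed.

Lemma L_Ya_zariski_irreducible : (exists x, L x) -> zariski_irreducible L.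
Proof.
move=> L0; split=> // S1 S2 S1R S2R cover.
apply: contrapT => /not_orP [/existsNP [x1 /not_implyP [Lx1 x1S1]]
                            /existsNP [x2 /not_implyP [Lx2 x2S2]]].
have [Ux1 _ _] := (L_YaP x1).1 Lx1; have [Ux2 _ _] := (L_YaP x2).1 Lx2.
have [f1 S1f1 f1x1] := not_zero_locus Ux1 x1S1.
have [f2 S2f2 f2x2] := not_zero_locus Ux2 x2S2.
have [x Lx /andP [f1x f2x]] :=
  L_Ya_nonvanishing2 (S1R _ S1f1) (S2R _ S2f2) Lx1 Lx2 f1x1 f2x2.
by case: (cover x Lx) => [[_ /(_ f1 S1f1)]|[_ /(_ f2 S2f2)]] /eqP; apply/negP.
Qed.

Lemma FG_functions_regular f : FG_functions f -> regular f.
Proof. by case=> [[al _ ->]|[be _ ->]]; [exact: regular_F|exact: regular_G]. Qed.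

Lemma dfun_F al x v : dfun (F_fun al) x v = pairing al v.2.
Proof. by apply: eq_bigr => j _; rewrite dq_F dp_F mul0r add0r. Qed.

Definition dr_inv_q x (v : pt R n) : 'rV[C]_n :=
  \row_j (v.1 0 j + a 0 j / x.2 0 j ^+ 2 * v.2 0 j).

Lemma dfun_G be x v : Uopen x -> dfun (G_fun a be) x v = pairing be (dr_inv_q x v).
Proof.
move=> Ux; apply: eq_bigr => j _; rewrite dq_G dp_G ?Uopen_neq0 // mxE.
by move: (be 0 j) (a 0 j) (x.2 0 j) (v.1 0 j) (v.2 0 j) => u b p s w; ring.
Qed.

Lemma tangent_space_L x v : L x -> tangent_space L x v ->
  perp Y v.2 /\ dr_inv_q x v \in Y.
Proof.
move=> Lx Tv; have [Ux _ _] := (L_YaP x).1 Lx; split.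
  move=> al alY; rewrite -(dfun_F al x); apply: Tv; first exact: regular_F.
  by move=> y /L_YaP [_ + _]; apply.
apply: perp_perp => be be_perp; rewrite pairingC -dfun_G //; apply: Tv.
  exact: regular_G.
by move=> y /L_YaP [_ _]; apply.
Qed.

Lemma omega_dr_inv_q x v w :
  omega v w = pairing (dr_inv_q x w) v.2 - pairing (dr_inv_q x v) w.2.
Proof.
rewrite /omega /pairing -sumrB; apply: eq_bigr => j _; rewrite !mxE.
move: (a 0 j / x.2 0 j ^+ 2) (v.1 0 j) (v.2 0 j) (w.1 0 j) (w.2 0 j) => c p q r s.
ring.
Qed.

Lemma L_Ya_isotropic x : L x -> forall v w,
  tangent_space L x v -> tangent_space L x w -> omega v w = 0.
Proof.
move=> Lx v w /(tangent_space_L Lx) [v_perp vY] /(tangent_space_L Lx) [w_perp wY].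
by rewrite (omega_dr_inv_q x) v_perp // w_perp // subrr.
Qed.

Local Notation A0 := (row_base (basis_mx Y)).
Local Notation B0 := (row_base (perp_mx Y)).
Local Notation rA := (\rank (basis_mx Y)).
Local Notation rK := (\rank (perp_mx Y)).

Lemma codim_L : (n + n - n)%N = (rA + rK)%N.
Proof. by rewrite addnK rank_basis_perp. Qed.

Definition defining_fun (k : 'I_(rA + rK)) : pt R n -> C :=
  match fintype.split k with
  | inl i => F_fun (row i A0)
  | inr i => G_fun a (row i B0)
  end.

Lemma L_Ya_defining_funs y : L y <-> Uopen y /\ forall k, defining_fun k y = 0.
Proof.
rewrite L_YaP; split=> [[Uy Fy Gy]|[Uy Hy]].
  split=> // k; rewrite /defining_fun; case: fintype.split => i.
    by apply: Fy; rewrite memv_basis_mx (submx_trans (row_sub _ _)) ?eq_row_base.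
  by apply: Gy; apply/perp_mxP; rewrite (submx_trans (row_sub _ _)) ?eq_row_base.
split=> // [al|be]; rewrite ?memv_basis_mx ?perp_mxP => sub.
  change (pairing al y.2 = 0).
  apply: (pairing_submx (B := A0)); last by rewrite eq_row_base.
  by move=> i; move: (Hy (unsplit (inl i))); rewrite /defining_fun unsplitK.
rewrite G_pairing; apply: (pairing_submx (B := B0)); last by rewrite eq_row_base.
move=> i; rewrite -G_pairing.
by move: (Hy (unsplit (inr i))); rewrite /defining_fun unsplitK.
Qed.

Definition dp_G_diag x : 'M[C]_n := diag_mx (\row_j (a 0 j / x.2 0 j ^+ 2)).

Lemma dmx_F al x : dmx (F_fun al) x = row_mx 0 al.
Proof. by congr row_mx; apply/rowP => j; rewrite !mxE ?dq_F ?dp_F. Qed.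

Lemma dmx_G be x : Uopen x -> dmx (G_fun a be) x = row_mx be (be *m dp_G_diag x).
Proof.
move=> Ux; rewrite mul_mx_diag; congr row_mx; apply/rowP => j; rewrite !mxE.
  exact: dq_G.
by rewrite dp_G ?Uopen_neq0 // mulrA.
Qed.

Definition jacobian_mx x : 'M[C]_(rA + rK, n + n) :=
  col_mx (row_mx 0 A0) (row_mx B0 (B0 *m dp_G_diag x)).

Lemma dmx_defining_fun x k : Uopen x -> dmx (defining_fun k) x = row k (jacobian_mx x).
Proof.
move=> Ux; rewrite -[k]splitK /defining_fun unsplitK; case: fintype.split => i /=.
  by rewrite dmx_F rowKu row_row_mx row0.
by rewrite dmx_G // /jacobian_mx rowKd row_row_mx -row_mul.
Qed.

Lemma L_Ya_smooth : smooth_of_dim n L.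
Proof.
move=> x Lx; have [Ux _ _] := (L_YaP x).1 Lx.
exists (fun i => defining_fun (cast_ord codim_L i)); split.
- move=> i; rewrite /defining_fun.
  by case: fintype.split => j; [exact: regular_F|exact: regular_G].
- have -> : \matrix_i dmx (defining_fun (cast_ord codim_L i)) x
            = castmx (esym codim_L, erefl) (jacobian_mx x).
    apply/matrixP => i j; rewrite castmxE mxE dmx_defining_fun // mxE esymK.
    by rewrite cast_ord_id.
  apply/eqP; change (row_free (castmx (esym codim_L, erefl) (jacobian_mx x))).
  by rewrite row_free_castmx row_free_block ?row_base_free.
- near=> y; rewrite L_Ya_defining_funs.
  by split=> -[Uy Hy]; split=> // k; rewrite -(cast_ordKV codim_L k).
Unshelve. all: by end_near.
Qed.

Lemma L_Ya_nonempty :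
  (forall j, ~ (forall be, perp Y be -> be 0 j = 0)) -> exists x, L x.
Proof.
move=> /perp_nonzero_coords [eta eta_perp eta0].
by exists (r_map a (0, eta)), 0, eta; rewrite mem0v.
Qed.

End LagrangianSubvariety.

Theorem lemma4p1 (R : realType) (n k : nat) (Y : {vspace 'rV[cplx R]_n})
    (a : 'rV[cplx R]_n) :
  \dim Y = k ->
  (forall j : 'I_n, a 0 j != 0) ->
  (forall j : 'I_n, ~ (forall al, al \in Y -> al 0 j = 0)) ->
  (forall j : 'I_n, ~ (forall be, perp Y be -> be 0 j = 0)) ->
  [/\ zariski_irreducible (L_Ya Y a),
      lagrangian_subvariety (L_Ya Y a),
      (forall x, L_Ya Y a x <->
         [/\ Uopen x,
             (forall al, al \in Y -> F_fun al x = 0)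
           & (forall be, perp Y be -> G_fun a be x = 0)])
    & in_involution (fun H => (exists2 al, al \in Y & H = F_fun al) \/
                              (exists2 be, perp Y be & H = G_fun a be))].
Proof.
move=> _ _ _ perp_coords; split.
- exact/L_Ya_zariski_irreducible/L_Ya_nonempty.
- split.
  + by move=> x /L_YaP [].
  + exists (FG_functions Y a).
    by split; [exact: FG_functions_regular|exact: L_Ya_zero_locus].
  + exact: L_Ya_smooth.
  + exact: L_Ya_isotropic.
- exact: L_YaP.
- exact: FG_in_involution.
Qed.
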